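(* Let $(V,\{\nu_n\})$ be an $L^\infty$-MOS and $S\subseteq V$ a subspace. Then $S$ is the kernel of a completely gauge-bounded linear map $\phi:V\to W$ into some $L^\infty$-MOS $(W,\{\omega_n\})$ if and only if $S$ is an $L^\infty$-MOS ideal of $V$. In the latter case the quotient map $\pi:V\to V/S$ is completely gauge-contractive with respect to the quotient gauges $q_n(A+M_n(S)_{sa})=\inf\{\nu_n(B):B\in A+M_n(S)_{sa}\}$, and $\ker\pi=S$.
   Context: An $L^\infty$-MOS is a complex $*$-vector space $V$ ($M_n(V)$ with $(x_{ij})^*=(x_{ji}^* )$, self-adjoint part $M_n(V)_{sa}$) with proper gauges $\nu_n:M_n(V)_{sa}\to[0,\infty)$ (subadditive, positively homogeneous, $\nu_n(A)=\nu_n(-A)=0\Rightarrow A=0$) such that $\nu_k(X^*AX)\le\|X\|^2\nu_n(A)$ for scalar $X\in M_{n,k}$ and $\nu_{n+k}(A\oplus B)=\max\{\nu_n(A),\nu_k(B)\}$. A linear map $\phi:(V,\{\nu_n\})\to(W,\{\omega_n\})$ is completely gauge-bounded if $\phi(x^* )=\phi(x)^*$ and there is $C>0$ with $\omega_n(\phi^{(n)}(A))\le C\nu_n(A)$ for all $n$, $A\in M_n(V)_{sa}$; completely gauge-contractive if $C=1$ works. For a gauged real vector space $(E,\nu)$, a subspace $T$ is a gauge ideal if whenever $x\in E$ and sequences $(a_j),(b_j)\subseteq T$ satisfy $\nu(x-a_j)\to0$ and $\nu(b_j-x)\to0$, then $x\in T$. A self-adjoint subspace $S\subseteq V$ is an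 $L^\infty$-MOS ideal if $S\cap V_{sa}$ is a gauge ideal of $(V_{sa},\nu_1)$. $V/S$ has involution $(x+S)^*=x^*+S$ and $M_n(V/S)_{sa}$ is identified with $M_n(V)_{sa}/M_n(S)_{sa}$. *)

From mathcomp Require Import ssreflect ssrfun ssrbool eqtype ssrnat seq fintype bigop.
From Stdlib Require Import Reals ClassicalEpsilon.

Set Implicit Arguments.
Unset Strict Implicit.

Local Open Scope R_scope.

Record Cx := Cmk { Cre : R; Cim : R }.
Definition C0 : Cx := Cmk 0 0.
Definition C1 : Cx := Cmk 1 0.
Definition RtoC (r : R) : Cx := Cmk r 0.
Definition Cadd (a b : Cx) : Cx := Cmk (Cre a + Cre b) (Cim a + Cim b).
Definition Cmul (a b : Cx) : Cx :=
  Cmk (Cre a * Cre b - Cim a * Cim b) (Cre a * Cim b + Cim a * Cre b).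
Definition Cconj (a : Cx) : Cx := Cmk (Cre a) (- Cim a).
Definition Cnorm2 (a : Cx) : R := Cre a * Cre a + Cim a * Cim a.

Record StarOps := {
  car :> Type;
  vzero : car;
  vadd : car -> car -> car;
  vopp : car -> car;
  vscal : Cx -> car -> car;
  vstar : car -> car }.
Arguments vzero {s}.
Arguments vadd {s}.
Arguments vopp {s}.
Arguments vscal {s}.
Arguments vstar {s}.

Definition vsub {V : StarOps} (x y : V) : V := vadd x (vopp y).

Definition is_star_vspace (V : StarOps) : Prop :=
  (forall x y z : V, vadd x (vadd y z) = vadd (vadd x y) z) /\
  (forall x y : V, vadd x y = vadd y x) /\
  (forall x : V, vadd vzero x = x) /\
  (forall x : V, vadd (vopp x) x = vzero) /\
  (forall x : V, vscal C1 x = x) /\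
  (forall (a b : Cx) (x : V), vscal a (vscal b x) = vscal (Cmul a b) x) /\
  (forall (a : Cx) (x y : V), vscal a (vadd x y) = vadd (vscal a x) (vscal a y)) /\
  (forall (a b : Cx) (x : V), vscal (Cadd a b) x = vadd (vscal a x) (vscal b x)) /\
  (forall x y : V, vstar (vadd x y) = vadd (vstar x) (vstar y)) /\
  (forall (a : Cx) (x : V), vstar (vscal a x) = vscal (Cconj a) (vstar x)) /\
  (forall x : V, vstar (vstar x) = x).

Definition is_subspace (V : StarOps) (S : V -> Prop) : Prop :=
  S vzero /\ (forall x y, S x -> S y -> S (vadd x y)) /\
  (forall (a : Cx) x, S x -> S (vscal a x)).

Definition Mat (V : Type) (n m : nat) := 'I_n -> 'I_m -> V.

Definition mzero {V : StarOps} n m : Mat V n m := fun _ _ => vzero.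
Definition madd {V : StarOps} n m (A B : Mat V n m) : Mat V n m :=
  fun i j => vadd (A i j) (B i j).
Definition mopp {V : StarOps} n m (A : Mat V n m) : Mat V n m :=
  fun i j => vopp (A i j).
Definition mrscal {V : StarOps} n m (t : R) (A : Mat V n m) : Mat V n m :=
  fun i j => vscal (RtoC t) (A i j).
Definition mstar {V : StarOps} n m (A : Mat V n m) : Mat V m n :=
  fun i j => vstar (A j i).
Definition selfadj {V : StarOps} n (A : Mat V n n) : Prop :=
  forall i j, A i j = vstar (A j i).

(* X^* A X for a scalar matrix X in M_{n,k}(C) and A in M_n(V) *)
Definition compress {V : StarOps} n k (X : 'I_n -> 'I_k -> Cx) (A : Mat V n n)
  : Mat V k k :=
  fun p q => \big[vadd/vzero]_(i < n) \big[vadd/vzero]_(j < n)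
               vscal (Cmul (Cconj (X i p)) (X j q)) (A i j).

Definition dsum {V : StarOps} n k (A : Mat V n n) (B : Mat V k k)
  : Mat V (n + k)%nat (n + k)%nat :=
  fun i j => match fintype.split i, fintype.split j with
             | inl a, inl b => A a b
             | inr a, inr b => B a b
             | _, _ => vzero
             end.

Definition cvnorm2 k (v : 'I_k -> Cx) : R := \big[Rplus/0]_(j < k) Cnorm2 (v j).
Definition cmatvec n k (X : 'I_n -> 'I_k -> Cx) (v : 'I_k -> Cx) : 'I_n -> Cx :=
  fun i => \big[Cadd/C0]_(j < k) Cmul (X i j) (v j).
Definition opnorm n k (X : 'I_n -> 'I_k -> Cx) : R :=
  epsilon (inhabits 0)
    (is_lub (fun t => exists v, cvnorm2 v <= 1 /\ t = sqrt (cvnorm2 (cmatvec X v)))).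

(* a proper gauge on the real vector space M_n(V)_sa (values off M_n(V)_sa irrelevant) *)
Definition is_proper_gauge {V : StarOps} n (g : Mat V n n -> R) : Prop :=
  (forall A, selfadj A -> 0 <= g A) /\
  (forall A B, selfadj A -> selfadj B -> g (madd A B) <= g A + g B) /\
  (forall t A, selfadj A -> 0 < t -> g (mrscal t A) = t * g A) /\
  (forall A, selfadj A -> g A = 0 -> g (mopp A) = 0 -> A = (fun _ _ => vzero)).

Definition is_LinfMOS (V : StarOps) (nu : forall n, Mat V n n -> R) : Prop :=
  is_star_vspace V /\
  (forall n, is_proper_gauge (nu n)) /\
  (forall n k (X : 'I_n -> 'I_k -> Cx) (A : Mat V n n), selfadj A ->
     nu k (compress X A) <= (opnorm X) ^ 2 * nu n A) /\
  (forall n k (A : Mat V n n) (B : Mat V k k), selfadj A -> selfadj B ->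
     nu (n + k)%nat (dsum A B) = Rmax (nu n A) (nu k B)).

Definition mapn {V W : StarOps} (phi : V -> W) n m (A : Mat V n m) : Mat W n m :=
  fun i j => phi (A i j).

Definition is_linear_star {V W : StarOps} (phi : V -> W) : Prop :=
  (forall x y, phi (vadd x y) = vadd (phi x) (phi y)) /\
  (forall a x, phi (vscal a x) = vscal a (phi x)) /\
  (forall x, phi (vstar x) = vstar (phi x)).

Definition comp_gauge_bounded (V : StarOps) (nu : forall n, Mat V n n -> R)
  (W : StarOps) (om : forall n, Mat W n n -> R) (phi : V -> W) : Prop :=
  is_linear_star phi /\
  exists C, 0 < C /\
    forall n (A : Mat V n n), selfadj A -> om n (mapn phi A) <= C * nu n A.

Definition comp_gauge_contractive (V : StarOps) (nu : forall n, Mat V n n -> R)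
  (W : StarOps) (om : forall n, Mat W n n -> R) (phi : V -> W) : Prop :=
  is_linear_star phi /\
  forall n (A : Mat V n n), selfadj A -> om n (mapn phi A) <= nu n A.

Definition is_gauge_ideal {V : StarOps} (E : V -> Prop) (g : V -> R) (T : V -> Prop)
  : Prop :=
  forall x, E x -> forall a b : nat -> V,
    (forall j, T (a j)) -> (forall j, T (b j)) ->
    Un_cv (fun j => g (vsub x (a j))) 0 ->
    Un_cv (fun j => g (vsub (b j) x)) 0 -> T x.

Definition Vsa {V : StarOps} (x : V) : Prop := x = vstar x.

Definition nu1 {V : StarOps} (nu : forall n, Mat V n n -> R) (x : V) : R :=
  nu 1%nat (fun _ _ => x).

Definition is_MOS_ideal (V : StarOps) (nu : forall n, Mat V n n -> R) (S : V -> Prop)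
  : Prop :=
  is_subspace S /\ (forall x, S x -> S (vstar x)) /\
  is_gauge_ideal Vsa (nu1 nu) (fun x => S x /\ Vsa x).

Definition coset {V : StarOps} (S : V -> Prop) (x : V) : V -> Prop :=
  fun y => S (vsub x y).
Definition Qcar {V : StarOps} (S : V -> Prop) : Type :=
  { P : V -> Prop | exists x, P = coset S x }.
Definition cls {V : StarOps} (S : V -> Prop) (x : V) : Qcar S :=
  exist _ (coset S x) (ex_intro _ x erefl).
Definition rep {V : StarOps} (S : V -> Prop) (p : Qcar S) : V :=
  proj1_sig (constructive_indefinite_description _ (proj2_sig p)).

Definition QuotOps (V : StarOps) (S : V -> Prop) : StarOps := {|
  car := Qcar S;
  vzero := cls S vzero;
  vadd := fun p q => cls S (vadd (rep p) (rep q));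
  vopp := fun p => cls S (vopp (rep p));
  vscal := fun a p => cls S (vscal a (rep p));
  vstar := fun p => cls S (vstar (rep p)) |}.

Arguments QuotOps : clear implicits.

Definition quotmap (V : StarOps) (S : V -> Prop) : V -> QuotOps V S := cls S.

Definition is_glb (E : R -> Prop) (r : R) : Prop :=
  (forall t, E t -> r <= t) /\ (forall s, (forall t, E t -> s <= t) -> s <= r).

(* q_n(A + M_n(S)_sa) = inf { nu_n(B) : B in A + M_n(S)_sa }, where a self-adjoint
   matrix over V/S is identified with the class of its self-adjoint lifts *)
Definition qgauge (V : StarOps) (nu : forall n, Mat V n n -> R) (S : V -> Prop)
  n (A : Mat (QuotOps V S) n n) : R :=
  epsilon (inhabits 0)
    (is_glb (fun r => exists B : Mat V n n,
                selfadj B /\ mapn (quotmap S) B = A /\ r = nu n B)).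

Arguments is_LinfMOS : clear implicits.
Arguments comp_gauge_bounded : clear implicits.
Arguments comp_gauge_contractive : clear implicits.
Arguments is_MOS_ideal : clear implicits.
Arguments is_subspace : clear implicits.
Arguments qgauge : clear implicits.
Arguments quotmap : clear implicits.

(* A completely gauge-bounded map phi into an L^oo-MOS (W, om) has a gauge ideal as
   kernel: if nu_1(x - a_j) -> 0 and nu_1(b_j - x) -> 0 with a_j, b_j in ker phi, then
   om_1(phi x) and om_1(-phi x) vanish, so phi x = 0 because om_1 is proper.
   Conversely, for an ideal S the quotient gauge q_n is the infimum of nu_n over the
   self-adjoint lifts; subadditivity, homogeneity and the compression inequality pass to
   infima, and so does the direct-sum identity, the lower bound coming from compressing a
   lift of A (+) B by the two coordinate embeddings.  Properness of q_1 is exactly the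
   gauge-ideal condition, and properness of q_n follows since a matrix whose scalar
   compressions x^* A x all vanish is zero (polarization with the scalars 1 and i).
   The quotient map is contractive because every A lifts pi(A). *)

Set Warnings "-notation-overridden -redundant-canonical-projection".
From HB Require Import structures.
From Pilot Require Import Defs.
From mathcomp Require Import ssreflect ssrfun ssrbool eqtype ssrnat seq fintype bigop.
From Stdlib Require Import Reals ClassicalEpsilon Lra Lia Classical
  FunctionalExtensionality PropExtensionality ProofIrrelevance.

Set Implicit Arguments.
Open Scope R_scope.

Lemma Cx_ext (a b : Cx) : Cre a = Cre b -> Cim a = Cim b -> a = b.
Proof. by case: a => ? ?; case: b => ? ? /= -> ->. Qed.

Ltac cx := apply: Cx_ext; rewrite /=; lra.

Lemma CmulC (a b : Cx) : Cmul a b = Cmul b a.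
Proof. apply: Cx_ext; rewrite /=; ring. Qed.
Lemma Cmul0l (b : Cx) : Cmul Defs.C0 b = Defs.C0. Proof. cx. Qed.
Lemma Cmul0r (b : Cx) : Cmul b Defs.C0 = Defs.C0. Proof. cx. Qed.
Lemma Cconj0 : Cconj Defs.C0 = Defs.C0. Proof. cx. Qed.
Lemma Cmul_conj11 : Cmul (Cconj Defs.C1) Defs.C1 = Defs.C1. Proof. cx. Qed.

Lemma CaddA : associative Cadd. Proof. move=> a b c; cx. Qed.
Lemma CaddC : commutative Cadd. Proof. move=> a b; cx. Qed.
Lemma Cadd0 : left_id Defs.C0 Cadd. Proof. move=> a; cx. Qed.
HB.instance Definition _ := Monoid.isComLaw.Build Cx Defs.C0 Cadd CaddA CaddC Cadd0.

Lemma RplusA : associative Rplus. Proof. move=> a b c; lra. Qed.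
Lemma RplusC : commutative Rplus. Proof. move=> a b; lra. Qed.
Lemma Rplus0 : left_id 0 Rplus. Proof. move=> a; lra. Qed.
HB.instance Definition _ := Monoid.isComLaw.Build R 0 Rplus RplusA RplusC Rplus0.

Lemma mat_ext {T : Type} n m (A B : Mat T n m) : (forall i j, A i j = B i j) -> A = B.
Proof. by move=> h; do 2 apply: functional_extensionality => ?; exact: h. Qed.

Lemma mat11 {T : Type} (M : Mat T 1 1) : M = fun _ _ => M ord0 ord0.
Proof. by apply: mat_ext => i j; rewrite (ord1 i) (ord1 j). Qed.

Section StarSpace.
Variable W : StarOps.
Hypothesis HW : is_star_vspace W.

Lemma addvA (x y z : W) : vadd x (vadd y z) = vadd (vadd x y) z.
Proof. by case: HW => ->. Qed.
Lemma addvC (x y : W) : vadd x y = vadd y x.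
Proof. by case: HW => _ [->]. Qed.
Lemma add0v (x : W) : vadd vzero x = x.
Proof. by case: HW => _ [_ [->]]. Qed.
Lemma addNv (x : W) : vadd (vopp x) x = vzero.
Proof. by case: HW => _ [_ [_ [->]]]. Qed.
Lemma scale1v (x : W) : vscal Defs.C1 x = x.
Proof. by case: HW => _ [_ [_ [_ [->]]]]. Qed.
Lemma scalevA a b (x : W) : vscal a (vscal b x) = vscal (Cmul a b) x.
Proof. by case: HW => _ [_ [_ [_ [_ [->]]]]]. Qed.
Lemma scalevDr a (x y : W) : vscal a (vadd x y) = vadd (vscal a x) (vscal a y).
Proof. by case: HW => _ [_ [_ [_ [_ [_ [->]]]]]]. Qed.
Lemma scalevDl a b (x : W) : vscal (Cadd a b) x = vadd (vscal a x) (vscal b x).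
Proof. by case: HW => _ [_ [_ [_ [_ [_ [_ [->]]]]]]]. Qed.
Lemma starvD (x y : W) : vstar (vadd x y) = vadd (vstar x) (vstar y).
Proof. by case: HW => _ [_ [_ [_ [_ [_ [_ [_ [->]]]]]]]]. Qed.
Lemma starvZ a (x : W) : vstar (vscal a x) = vscal (Cconj a) (vstar x).
Proof. by case: HW => _ [_ [_ [_ [_ [_ [_ [_ [_ [->]]]]]]]]]. Qed.
Lemma starvK (x : W) : vstar (vstar x) = x.
Proof. by case: HW => _ [_ [_ [_ [_ [_ [_ [_ [_ [_ ->]]]]]]]]]. Qed.

Lemma addv0 (x : W) : vadd x vzero = x.
Proof. by rewrite addvC add0v. Qed.
Lemma addvN (x : W) : vadd x (vopp x) = vzero.
Proof. by rewrite addvC addNv. Qed.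
Lemma addKv (x y : W) : vadd (vopp x) (vadd x y) = y.
Proof. by rewrite addvA addNv add0v. Qed.
Lemma addvI (x y z : W) : vadd x y = vadd x z -> y = z.
Proof. by move=> h; rewrite -(addKv x y) h addKv. Qed.
Lemma oppv_unique (x y : W) : vadd y x = vzero -> y = vopp x.
Proof. by move=> h; rewrite -(addv0 y) -(addvN x) addvA h add0v. Qed.

Lemma scale0v (x : W) : vscal Defs.C0 x = vzero.
Proof.
apply: (@addvI (vscal Defs.C0 x)); rewrite addv0 -scalevDl.
by have -> : Cadd Defs.C0 Defs.C0 = Defs.C0 by cx.
Qed.
Lemma scalev0 a : vscal a (@vzero W) = vzero.
Proof. by apply: (@addvI (vscal a vzero)); rewrite addv0 -scalevDr add0v. Qed.
Lemma oppvE (x : W) : vopp x = vscal (RtoC (-1)) x.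
Proof.
symmetry; apply: oppv_unique.
rewrite -{2}(scale1v x) -scalevDl -(scale0v x); congr vscal; cx.
Qed.
Lemma oppvK (x : W) : vopp (vopp x) = x.
Proof. by symmetry; apply: oppv_unique; rewrite addvN. Qed.
Lemma oppv0 : vopp (@vzero W) = vzero.
Proof. by rewrite oppvE scalev0. Qed.
Lemma oppvD (x y : W) : vopp (vadd x y) = vadd (vopp x) (vopp y).
Proof. by rewrite !oppvE scalevDr. Qed.
Lemma scalevN a (x : W) : vscal a (vopp x) = vopp (vscal a x).
Proof. by rewrite !oppvE !scalevA CmulC. Qed.
Lemma starv0 : vstar (@vzero W) = vzero.
Proof. by rewrite -{1}(scale0v vzero) starvZ Cconj0 scale0v. Qed.
Lemma starvN (x : W) : vstar (vopp x) = vopp (vstar x).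
Proof. rewrite !oppvE starvZ; congr vscal; cx. Qed.

Lemma subvDD (a b c d : W) : vsub (vadd a b) (vadd c d) = vadd (vsub a c) (vsub b d).
Proof.
rewrite /vsub oppvD -!addvA; congr vadd; rewrite !addvA; congr vadd; exact: addvC.
Qed.
Lemma subvNN (a b : W) : vsub (vopp a) (vopp b) = vopp (vsub a b).
Proof. by rewrite /vsub oppvD. Qed.
Lemma subvZZ c (a b : W) : vsub (vscal c a) (vscal c b) = vscal c (vsub a b).
Proof. by rewrite /vsub scalevDr scalevN. Qed.
Lemma subvSS (a b : W) : vsub (vstar a) (vstar b) = vstar (vsub a b).
Proof. by rewrite /vsub starvD starvN. Qed.
Lemma subvv (a : W) : vsub a a = vzero.
Proof. exact: addvN. Qed.
Lemma subv0 (a : W) : vsub a vzero = a.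
Proof. by rewrite /vsub oppv0 addv0. Qed.
Lemma sub0v (a : W) : vsub vzero a = vopp a.
Proof. by rewrite /vsub add0v. Qed.
Lemma subKv (a b : W) : vsub a (vsub a b) = b.
Proof. by rewrite /vsub oppvD oppvK addvA addvN add0v. Qed.
Lemma addvK (a b : W) : vsub (vadd a b) b = a.
Proof. by rewrite /vsub -addvA addvN addv0. Qed.
Lemma oppvB (a b : W) : vopp (vsub a b) = vsub b a.
Proof. by rewrite /vsub oppvD oppvK addvC. Qed.
Lemma subv_via (a b c : W) : vsub a c = vadd (vsub a b) (vsub b c).
Proof. by rewrite /vsub addvA -(addvA a) addNv addv0. Qed.

HB.instance Definition _ := Monoid.isComLaw.Build (car W) vzero (@vadd W) addvA addvC add0v.

Lemma big_vadd_one n (i : 'I_n) (F : 'I_n -> W) :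
  (forall k, k != i -> F k = vzero) -> \big[vadd/vzero]_(k < n) F k = F i.
Proof. by move=> h; rewrite (bigD1 i) //= big1 ?addv0 // => k /h. Qed.

Lemma big_vadd_two n (i j : 'I_n) (F : 'I_n -> W) : i != j ->
  (forall k, k != i -> k != j -> F k = vzero) ->
  \big[vadd/vzero]_(k < n) F k = vadd (F i) (F j).
Proof.
move=> ij h; rewrite (bigD1 i) //= (bigD1 j) /=; last by rewrite eq_sym.
by rewrite big1 ?addv0 // => k /andP [ki kj]; exact: h.
Qed.

Lemma selfadj_madd n (A B : Mat W n n) :
  selfadj A -> selfadj B -> selfadj (madd A B).
Proof. by move=> hA hB i j; rewrite /madd starvD -hA -hB. Qed.
Lemma selfadj_mopp n (A : Mat W n n) : selfadj A -> selfadj (mopp A).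
Proof. by move=> hA i j; rewrite /mopp starvN -hA. Qed.
Lemma selfadj_mrscal n t (A : Mat W n n) : selfadj A -> selfadj (mrscal t A).
Proof. move=> hA i j; rewrite /mrscal starvZ -hA; congr vscal; cx. Qed.
Lemma selfadj_dsum n k (A : Mat W n n) (B : Mat W k k) :
  selfadj A -> selfadj B -> selfadj (dsum A B).
Proof.
move=> hA hB i j; rewrite /dsum.
by case: (fintype.split i) => a; case: (fintype.split j) => b //; rewrite starv0.
Qed.

Lemma scalev_half_addvv (a : W) : vscal (RtoC (/ 2)) (vadd a a) = a.
Proof.
rewrite -{1 2}(scale1v a) -scalevDl scalevA -{2}(scale1v a); congr vscal.
by apply: Cx_ext; rewrite /=; field.
Qed.

Lemma mrscalK n t (A : Mat W n n) : 0 < t -> mrscal (/ t) (mrscal t A) = A.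
Proof.
move=> ht; apply: mat_ext => i j; rewrite /mrscal scalevA -{2}(scale1v (A i j)).
by congr vscal; apply: Cx_ext; rewrite /=; field; lra.
Qed.

Lemma dsum_lshift n k (A : Mat W n n) (B : Mat W k k) p r :
  dsum A B (lshift k p) (lshift k r) = A p r.
Proof. by rewrite /dsum !(unsplitK (inl _ _) : fintype.split (lshift k _) = _). Qed.
Lemma dsum_rshift n k (A : Mat W n n) (B : Mat W k k) p r :
  dsum A B (rshift n p) (rshift n r) = B p r.
Proof. by rewrite /dsum !(unsplitK (inr _ _) : fintype.split (rshift n _) = _). Qed.

Lemma compress_selfadj n k (X : 'I_n -> 'I_k -> Cx) (A : Mat W n n) :
  selfadj A -> selfadj (compress X A).
Proof.
move=> hA p q; rewrite /compress (big_morph vstar starvD starv0) exchange_big /=.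
apply: eq_bigr => i _; rewrite (big_morph vstar starvD starv0).
apply: eq_bigr => j _; rewrite starvZ -hA; congr vscal; cx.
Qed.

Lemma compress_mopp n k (X : 'I_n -> 'I_k -> Cx) (A : Mat W n n) :
  compress X (mopp A) = mopp (compress X A).
Proof.
apply: mat_ext => p q; rewrite /compress /mopp (big_morph vopp oppvD oppv0).
apply: eq_bigr => i _; rewrite (big_morph vopp oppvD oppv0).
by apply: eq_bigr => j _; rewrite scalevN.
Qed.

Definition emb N n (f : 'I_n -> 'I_N) : 'I_N -> 'I_n -> Cx :=
  fun i p => if i == f p then Defs.C1 else Defs.C0.

Lemma compress_emb N n (f : 'I_n -> 'I_N) (C : Mat W N N) p q :
  compress (emb f) C p q = C (f p) (f q).
Proof.
rewrite /compress (big_vadd_one (f p)); last first.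
  move=> i hi; apply: big1 => j _.
  by rewrite /emb (negbTE hi) Cconj0 Cmul0l scale0v.
rewrite (big_vadd_one (f q)); last first.
  by move=> j hj; rewrite /emb (negbTE hj) Cmul0r scale0v.
by rewrite /emb !eqxx Cmul_conj11 scale1v.
Qed.

Definition col n (x : 'I_n -> Cx) : 'I_n -> 'I_1 -> Cx := fun i _ => x i.

Lemma compress_col1 n (x : 'I_n -> Cx) (i : 'I_n) (A : Mat W n n) p q :
  (forall k, k != i -> x k = Defs.C0) ->
  compress (col x) A p q = vscal (Cmul (Cconj (x i)) (x i)) (A i i).
Proof.
move=> h; rewrite /compress (big_vadd_one i); last first.
  by move=> k hk; apply: big1 => j _; rewrite /col (h k hk) Cconj0 Cmul0l scale0v.
by rewrite (big_vadd_one i) // => j hj; rewrite /col (h j hj) Cmul0r scale0v.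
Qed.

Lemma compress_col2 n (x : 'I_n -> Cx) (i j : 'I_n) (A : Mat W n n) p q :
  i != j -> (forall k, k != i -> k != j -> x k = Defs.C0) ->
  compress (col x) A p q =
  vadd (vadd (vscal (Cmul (Cconj (x i)) (x i)) (A i i))
             (vscal (Cmul (Cconj (x i)) (x j)) (A i j)))
       (vadd (vscal (Cmul (Cconj (x j)) (x i)) (A j i))
             (vscal (Cmul (Cconj (x j)) (x j)) (A j j))).
Proof.
move=> ij h; rewrite /compress (big_vadd_two i j _ ij); last first.
  move=> k hk hk'; apply: big1 => l _.
  by rewrite /col (h k hk hk') Cconj0 Cmul0l scale0v.
by rewrite !(big_vadd_two i j _ ij) // => l hl hl'; rewrite /col (h l hl hl') Cmul0r scale0v.
Qed.

(* Polarization: the vectors e_i, e_i + e_j and e_i + i e_j recover A_ii, A_ij + A_ji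
   and i (A_ij - A_ji). *)
Lemma compress_col_eq0 n (A : Mat W n n) :
  (forall x : 'I_n -> Cx, compress (col x) A ord0 ord0 = vzero) ->
  A = fun _ _ => vzero.
Proof.
move=> hc.
have hdiag : forall i, A i i = vzero.
  move=> i; have := hc (fun k => if k == i then Defs.C1 else Defs.C0).
  by rewrite (compress_col1 _ i) ?eqxx ?Cmul_conj11 ?scale1v // => k /negbTE ->.
apply: mat_ext => i j; have [-> | ij] := eqVneq i j; first exact: hdiag.
have ji : j != i by rewrite eq_sym.
have hsym := hc (fun k => if k == i then Defs.C1 else if k == j then Defs.C1 else Defs.C0).
rewrite (compress_col2 _ i j _ _ _ ij) in hsym; last by move=> k /negbTE -> /negbTE ->.
rewrite /= eqxx (negbTE ji) eqxx Cmul_conj11 !scale1v !hdiag add0v addv0 in hsym.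
have hanti := hc (fun k => if k == i then Defs.C1 else if k == j then Cmk 0 1 else Defs.C0).
rewrite (compress_col2 _ i j _ _ _ ij) in hanti; last by move=> k /negbTE -> /negbTE ->.
rewrite /= eqxx (negbTE ji) eqxx !hdiag !scalev0 add0v addv0 in hanti.
have hji : A j i = vopp (A i j) by apply: oppv_unique; rewrite addvC.
rewrite hji oppvE scalevA -scalevDl in hanti.
rewrite -(scale1v (A i j)).
have -> : Defs.C1 = Cmul (Cmk 0 (- / 2)) (Cadd (Cmul (Cconj Defs.C1) (Cmk 0 1))
                 (Cmul (Cmul (Cconj (Cmk 0 1)) Defs.C1) (RtoC (-1)))).
  by apply: Cx_ext; rewrite /=; field.
by rewrite -scalevA hanti scalev0.
Qed.

End StarSpace.

Lemma opnorm_sq_le1 N n (X : 'I_N -> 'I_n -> Cx) :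
  (forall v, cvnorm2 (cmatvec X v) <= cvnorm2 v) -> opnorm X ^ 2 <= 1.
Proof.
move=> hX.
set E := fun t => exists v, cvnorm2 v <= 1 /\ t = sqrt (cvnorm2 (cmatvec X v)).
have hE1 : forall t, E t -> 0 <= t <= 1.
  move=> t [v [hv ->]]; split; first exact: sqrt_pos.
  rewrite -sqrt_1; apply: sqrt_le_1_alt; exact: Rle_trans (hX v) hv.
have hne : E (sqrt (cvnorm2 (cmatvec X (fun _ => Defs.C0)))).
  exists (fun _ => Defs.C0); split => //.
  rewrite /cvnorm2 big1; [lra | move=> i _; rewrite /Cnorm2 /=; lra].
have hbd : bound E by exists 1 => t /hE1 [].
have [m hm] := completeness E hbd (ex_intro _ _ hne).
have [hup hleast] : is_lub E (opnorm X).
  by apply: (epsilon_spec (inhabits 0) (is_lub E)); exists m.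
have h0 : 0 <= opnorm X by apply: Rle_trans (proj1 (hE1 _ hne)) (hup _ hne).
have h1 : opnorm X <= 1 by apply: hleast => t /hE1 [].
simpl; nra.
Qed.

Lemma cmatvec_emb_lshift n k (v : 'I_n -> Cx) :
  cvnorm2 (cmatvec (emb (@lshift n k)) v) <= cvnorm2 v.
Proof.
rewrite /cvnorm2 big_split_ord /= [X in _ + X]big1 ?Rplus_0_r.
  apply: Req_le; apply: eq_bigr => p _; congr Cnorm2.
  rewrite /cmatvec (bigD1 p) //= big1; first by rewrite /emb eqxx; cx.
  by move=> j hj; rewrite /emb eq_lshift eq_sym (negbTE hj); cx.
move=> i _; rewrite /cmatvec big1; first by rewrite /Cnorm2 /=; lra.
by move=> j _; rewrite /emb eq_rlshift; cx.
Qed.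

Lemma cmatvec_emb_rshift n k (v : 'I_k -> Cx) :
  cvnorm2 (cmatvec (emb (@rshift n k)) v) <= cvnorm2 v.
Proof.
rewrite /cvnorm2 big_split_ord /= big1 ?Rplus_0_l.
  apply: Req_le; apply: eq_bigr => p _; congr Cnorm2.
  rewrite /cmatvec (bigD1 p) //= big1; first by rewrite /emb eqxx; cx.
  by move=> j hj; rewrite /emb eq_rshift eq_sym (negbTE hj); cx.
move=> i _; rewrite /cmatvec big1; first by rewrite /Cnorm2 /=; lra.
by move=> j _; rewrite /emb eq_lrshift; cx.
Qed.

Lemma Rle_of_le_add_eps x y : (forall e, 0 < e -> x <= y + e) -> x <= y.
Proof.
move=> h; apply: Rnot_lt_le => hl; have := h ((x - y) / 2) ltac:(lra); lra.
Qed.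

Lemma Rle0_of_le_mul_cv0 y C (u : nat -> R) :
  0 < C -> (forall j, y <= C * u j) -> Un_cv u 0 -> y <= 0.
Proof.
move=> hC h hu; apply: Rnot_lt_le => hy.
have [N hN] := hu (y / C) (Rdiv_lt_0_compat _ _ hy hC).
have := hN N (le_n N); rewrite /R_dist Rminus_0_r => /(Rle_lt_trans _ _ _ (Rle_abs _)).
move=> /(Rmult_lt_compat_l C _ _ hC); have := h N.
by rewrite /Rdiv (Rmult_comm y) -Rmult_assoc Rinv_r ?Rmult_1_l; lra.
Qed.

Lemma inv_succ_gt0 j : 0 < / INR j.+1.
Proof. by apply: Rinv_0_lt_compat; apply: lt_0_INR; lia. Qed.

Lemma Un_cv0_of_lt_inv (u : nat -> R) : (forall j, 0 <= u j < / INR j.+1) -> Un_cv u 0.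
Proof.
move=> h e he; have [N [hN hN0]] := archimed_cor1 e he; exists N => n hn.
have [hu0 hu] := h n; rewrite /R_dist Rminus_0_r Rabs_pos_eq //.
apply: Rlt_le_trans hu _; apply: Rle_trans (Rlt_le _ _ hN).
by apply: Rinv_le_contravar; [apply: lt_0_INR; lia | apply: le_INR; lia].
Qed.

Section LinearStar.
Variables V W : StarOps.
Hypothesis HV : is_star_vspace V.
Hypothesis HW : is_star_vspace W.
Variable phi : V -> W.
Hypothesis phi_lin : is_linear_star phi.

Lemma linearD x y : phi (vadd x y) = vadd (phi x) (phi y).
Proof. by case: phi_lin. Qed.
Lemma linearZ a x : phi (vscal a x) = vscal a (phi x).
Proof. by case: phi_lin => _ []. Qed.
Lemma linearS x : phi (vstar x) = vstar (phi x).
Proof. by case: phi_lin => _ []. Qed.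

Lemma linear0 : phi vzero = vzero.
Proof.
have h := linearD vzero vzero; rewrite add0v // in h.
by rewrite -{1}(addKv HW (phi vzero) (phi vzero)) -h addNv.
Qed.
Lemma linearN x : phi (vopp x) = vopp (phi x).
Proof. by apply: oppv_unique => //; rewrite -linearD addNv // linear0. Qed.
Lemma linearB x y : phi (vsub x y) = vsub (phi x) (phi y).
Proof. by rewrite /vsub linearD linearN. Qed.

Lemma mapn_madd n (A B : Mat V n n) : mapn phi (madd A B) = madd (mapn phi A) (mapn phi B).
Proof. by apply: mat_ext => i j; rewrite /mapn /madd linearD. Qed.
Lemma mapn_mrscal n t (A : Mat V n n) : mapn phi (mrscal t A) = mrscal t (mapn phi A).
Proof. by apply: mat_ext => i j; rewrite /mapn /mrscal linearZ. Qed.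
Lemma mapn_dsum n k (A : Mat V n n) (B : Mat V k k) :
  mapn phi (dsum A B) = dsum (mapn phi A) (mapn phi B).
Proof.
apply: mat_ext => i j; rewrite /mapn /dsum.
by case: (fintype.split i) => ?; case: (fintype.split j) => ?; rewrite ?linear0.
Qed.
Lemma mapn_compress n k (X : 'I_n -> 'I_k -> Cx) (A : Mat V n n) :
  mapn phi (compress X A) = compress X (mapn phi A).
Proof.
apply: mat_ext => p r; rewrite /mapn /compress (big_morph phi linearD linear0).
apply: eq_bigr => i _; rewrite (big_morph phi linearD linear0).
by apply: eq_bigr => j _; rewrite linearZ.
Qed.

End LinearStar.

Lemma kernel_is_MOS_ideal (V : StarOps) (nu : forall n, Mat V n n -> R)
    (W : StarOps) (om : forall n, Mat W n n -> R) (phi : V -> W) (S : V -> Prop) :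
  is_star_vspace V -> is_subspace V S -> is_LinfMOS W om ->
  comp_gauge_bounded V nu W om phi -> (forall x, S x <-> phi x = vzero) ->
  is_MOS_ideal V nu S.
Proof.
move=> HV HS [HW [om_gauge _]] [phi_lin [C [hC phi_bd]]] hker.
have [om_ge0 [_ [_ om_def]]] := om_gauge 1%nat.
have selfadj_const (y : W) : vstar y = y -> selfadj (fun _ _ : 'I_1 => y).
  by move=> hy i j; rewrite hy.
split=> //; split.
  by move=> x /hker hx; apply/hker; rewrite linearS // hx starv0.
move=> x hx a b ha hb cva cvb; split=> //; apply/hker.
have hphix : vstar (phi x) = phi x by rewrite -linearS // -hx.
have hsub (y z : V) : Vsa y -> Vsa z -> selfadj (fun _ _ : 'I_1 => vsub y z).
  by move=> hy hz i j; rewrite -subvSS // -hy -hz.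
have hpos : om 1%nat (fun _ _ => phi x) <= 0.
  apply: (Rle0_of_le_mul_cv0 hC _ cva) => j.
  have := phi_bd 1%nat _ (hsub _ _ hx (proj2 (ha j))).
  by rewrite /mapn linearB // (proj1 (hker _) (proj1 (ha j))) subv0.
have hneg : om 1%nat (mopp (fun _ _ => phi x)) <= 0.
  apply: (Rle0_of_le_mul_cv0 hC _ cvb) => j.
  have := phi_bd 1%nat _ (hsub _ _ (proj2 (hb j)) hx).
  by rewrite /mapn linearB // (proj1 (hker _) (proj1 (hb j))) sub0v.
have hsa := selfadj_const _ hphix.
have := om_def _ hsa (Rle_antisym _ _ hpos (om_ge0 _ hsa))
  (Rle_antisym _ _ hneg (om_ge0 _ (selfadj_mopp HW hsa))).
by move=> /(congr1 (fun M => M ord0 ord0)).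
Qed.

Section Quotient.
Variable V : StarOps.
Variable S : V -> Prop.
Hypothesis HV : is_star_vspace V.
Hypothesis HS : is_subspace V S.
Hypothesis S_star : forall x, S x -> S (vstar x).

Notation Q := (QuotOps V S).

Lemma subspace0 : S vzero. Proof. by case: HS. Qed.
Lemma subspaceD x y : S x -> S y -> S (vadd x y). Proof. by case: HS => _ [h _]; exact: h. Qed.
Lemma subspaceZ a x : S x -> S (vscal a x). Proof. by case: HS => _ [_ h]; exact: h. Qed.
Lemma subspaceN x : S x -> S (vopp x). Proof. by rewrite oppvE //; exact: subspaceZ. Qed.

Lemma coset_eq a b : coset S a = coset S b <-> S (vsub a b).
Proof.
split=> [e | h].
  have : coset S b b by rewrite /coset subvv //; exact: subspace0.
  by rewrite -e.
apply: functional_extensionality => y; apply: propositional_extensionality.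
rewrite /coset; split => hy.
  by rewrite (subv_via HV b a y) -oppvB //; apply: subspaceD hy; exact: subspaceN.
by rewrite (subv_via HV a b y); exact: subspaceD.
Qed.

Lemma cls_eq a b : cls S a = cls S b <-> S (vsub a b).
Proof.
split; first by move=> /(congr1 (@proj1_sig _ _)) /= /coset_eq.
move=> /coset_eq e; apply: (@eq_sig _ _ (cls S a) (cls S b) e).
exact: proof_irrelevance.
Qed.

Lemma repK (p : Qcar S) : cls S (rep p) = p.
Proof.
have e : coset S (rep p) = proj1_sig p.
  by rewrite /rep; case: (constructive_indefinite_description _ _) => x /= ->.
apply: (@eq_sig _ _ (cls S (rep p)) p e); exact: proof_irrelevance.
Qed.

Lemma quot_ind (P : Qcar S -> Prop) : (forall x, P (cls S x)) -> forall p, P p.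
Proof. by move=> h p; rewrite -(repK p). Qed.

Lemma rep_cls x : S (vsub (rep (cls S x)) x).
Proof. by apply/cls_eq; exact: repK. Qed.

Lemma cls_add x y : @vadd Q (cls S x) (cls S y) = cls S (vadd x y).
Proof. by apply/cls_eq; rewrite subvDD //; apply: subspaceD; exact: rep_cls. Qed.
Lemma cls_opp x : @vopp Q (cls S x) = cls S (vopp x).
Proof. by apply/cls_eq; rewrite subvNN //; apply: subspaceN; exact: rep_cls. Qed.
Lemma cls_scal a x : @vscal Q a (cls S x) = cls S (vscal a x).
Proof. by apply/cls_eq; rewrite subvZZ //; apply: subspaceZ; exact: rep_cls. Qed.
Lemma cls_star x : @vstar Q (cls S x) = cls S (vstar x).
Proof. by apply/cls_eq; rewrite subvSS //; apply: S_star; exact: rep_cls. Qed.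

Lemma quot_star_vspace : is_star_vspace Q.
Proof.
split; [|split; [|split; [|split; [|split; [|split; [|split; [|split; [|split; [|split]]]]]]]]].
- by elim/quot_ind => x; elim/quot_ind => y; elim/quot_ind => z; rewrite !cls_add addvA.
- by elim/quot_ind => x; elim/quot_ind => y; rewrite !cls_add addvC.
- by elim/quot_ind => x; rewrite [vzero]/= cls_add add0v.
- by elim/quot_ind => x; rewrite cls_opp cls_add addNv.
- by elim/quot_ind => x; rewrite cls_scal scale1v.
- by move=> a b; elim/quot_ind => x; rewrite !cls_scal scalevA.
- by move=> a; elim/quot_ind => x; elim/quot_ind => y; rewrite !(cls_scal, cls_add) scalevDr.
- by move=> a b; elim/quot_ind => x; rewrite !(cls_scal, cls_add) scalevDl.
- by elim/quot_ind => x; elim/quot_ind => y; rewrite !(cls_star, cls_add) starvD.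
- by move=> a; elim/quot_ind => x; rewrite !(cls_scal, cls_star) starvZ.
- by elim/quot_ind => x; rewrite !cls_star starvK.
Qed.

Lemma quotmap_kernel x : S x <-> quotmap V S x = vzero.
Proof. by rewrite /quotmap [vzero]/= cls_eq subv0. Qed.

Lemma quotmap_linear : is_linear_star (quotmap V S).
Proof. by split; [|split] => *; rewrite /quotmap ?cls_add ?cls_scal ?cls_star. Qed.

Definition lifts n (A : Mat Q n n) (B : Mat V n n) := selfadj B /\ mapn (quotmap V S) B = A.

(* The lift [(a_ij + a_ji^* ) / 2] of arbitrary representatives [a_ij] is self-adjoint. *)
Lemma selfadj_lift_exists n (A : Mat Q n n) : selfadj A -> exists B, lifts A B.
Proof.
move=> hA.
exists (fun i j => vscal (RtoC (/2)) (vadd (rep (A i j)) (vstar (rep (A j i))))); split.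
  by move=> i j; rewrite starvZ // starvD // starvK // addvC //; congr vscal; cx.
apply: mat_ext => i j; rewrite /mapn /quotmap -cls_scal -cls_add repK -cls_star repK -hA.
exact: scalev_half_addvv quot_star_vspace _.
Qed.

Lemma lifts_madd n (A B : Mat Q n n) C D :
  lifts A C -> lifts B D -> lifts (madd A B) (madd C D).
Proof.
move=> [hC eC] [hD eD]; split; first exact: selfadj_madd.
by rewrite mapn_madd ?eC ?eD //; exact: quotmap_linear.
Qed.

Lemma lifts_mrscal n t (A : Mat Q n n) B : lifts A B -> lifts (mrscal t A) (mrscal t B).
Proof.
move=> [hB eB]; split; first exact: selfadj_mrscal.
by rewrite mapn_mrscal ?eB //; exact: quotmap_linear.
Qed.

Lemma lifts_compress n k (X : 'I_n -> 'I_k -> Cx) (A : Mat Q n n) B :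
  lifts A B -> lifts (compress X A) (compress X B).
Proof.
move=> [hB eB]; split; first exact: compress_selfadj.
by rewrite mapn_compress ?eB //; [exact: quot_star_vspace | exact: quotmap_linear].
Qed.

Lemma lifts_dsum n k (A : Mat Q n n) (B : Mat Q k k) C D :
  lifts A C -> lifts B D -> lifts (dsum A B) (dsum C D).
Proof.
move=> [hC eC] [hD eD]; split; first exact: selfadj_dsum.
by rewrite mapn_dsum ?eC ?eD //; [exact: quot_star_vspace | exact: quotmap_linear].
Qed.

End Quotient.

Lemma glb_exists (E : R -> Prop) : (exists r, E r) -> (forall r, E r -> 0 <= r) ->
  exists m, is_glb E m.
Proof.
move=> [r0 hr0] hE.
have hbd : bound (fun t => E (- t)) by exists 0 => t /hE; lra.
have hne : exists t, E (- t) by exists (- r0); rewrite Ropp_involutive.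
have [m [hup hleast]] := completeness _ hbd hne.
exists (- m); split.
  by move=> t ht; have := hup (- t); rewrite Ropp_involutive => /(_ ht); lra.
move=> s hs; suff : m <= - s by lra.
by apply: hleast => t /hs; lra.
Qed.

Lemma gauge_definite_of_definite1 (W : StarOps) (g : forall n, Mat W n n -> R) :
  is_star_vspace W ->
  (forall n (A : Mat W n n), selfadj A -> 0 <= g n A) ->
  (forall n k (X : 'I_n -> 'I_k -> Cx) (A : Mat W n n), selfadj A ->
     g k (compress X A) <= opnorm X ^ 2 * g n A) ->
  (forall A : Mat W 1 1, selfadj A -> g 1%nat A = 0 -> g 1%nat (mopp A) = 0 ->
     A = fun _ _ => vzero) ->
  forall n (A : Mat W n n), selfadj A -> g n A = 0 -> g n (mopp A) = 0 ->
    A = fun _ _ => vzero.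
Proof.
move=> HW g_ge0 g_compress g_def1 n A hA hg hgN; apply: compress_col_eq0 => // x.
have hAN : selfadj (mopp A) by exact: selfadj_mopp.
have hY := compress_selfadj HW (col x) hA.
suff -> : compress (col x) A = fun _ _ => vzero by [].
apply: g_def1 => //; apply: Rle_antisym.
- by have := g_compress _ _ (col x) _ hA; rewrite hg Rmult_0_r.
- exact: g_ge0.
- rewrite -compress_mopp //.
  by have := g_compress _ _ (col x) _ hAN; rewrite hgN Rmult_0_r.
- by apply: g_ge0; exact: selfadj_mopp.
Qed.

Section QuotientGauge.
Variable V : StarOps.
Variable nu : forall n, Mat V n n -> R.
Arguments nu : clear implicits.
Variable S : V -> Prop.
Hypothesis HL : is_LinfMOS V nu.
Hypothesis HS : is_subspace V S.
Hypothesis S_star : forall x, S x -> S (vstar x).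

Notation Q := (QuotOps V S).
Notation q := (qgauge V nu S).

Let HV : is_star_vspace V. Proof. by case: HL. Qed.
Let HQ : is_star_vspace Q. Proof. exact: quot_star_vspace. Qed.

Lemma nu_ge0 n (A : Mat V n n) : selfadj A -> 0 <= nu n A.
Proof. by case: HL => _ [h _]; case: (h n) => h0 _; exact: h0. Qed.
Lemma nu_add n (A B : Mat V n n) : selfadj A -> selfadj B ->
  nu n (madd A B) <= nu n A + nu n B.
Proof. by case: HL => _ [h _]; case: (h n) => _ [h1 _]; exact: h1. Qed.
Lemma nu_scal n t (A : Mat V n n) : selfadj A -> 0 < t -> nu n (mrscal t A) = t * nu n A.
Proof. by case: HL => _ [h _]; case: (h n) => _ [_ [h1 _]]; exact: h1. Qed.
Lemma nu_compress n k (X : 'I_n -> 'I_k -> Cx) (A : Mat V n n) : selfadj A ->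
  nu k (compress X A) <= opnorm X ^ 2 * nu n A.
Proof. by case: HL => _ [_ [h _]]; exact: h. Qed.
Lemma nu_dsum n k (A : Mat V n n) (B : Mat V k k) : selfadj A -> selfadj B ->
  nu (n + k)%nat (dsum A B) = Rmax (nu n A) (nu k B).
Proof. by case: HL => _ [_ [_ h]]; exact: h. Qed.

Lemma qgauge_glb n (A : Mat Q n n) : selfadj A ->
  is_glb (fun r => exists B, selfadj B /\ mapn (quotmap V S) B = A /\ r = nu n B) (q n A).
Proof.
move=> hA; apply: epsilon_spec; apply: glb_exists.
  by have [B [hB eB]] := selfadj_lift_exists HV HS S_star hA; exists (nu n B), B.
by move=> r [B [hB [_ ->]]]; exact: nu_ge0.
Qed.

Lemma qgauge_le n (A : Mat Q n n) B : lifts A B -> q n A <= nu n B.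
Proof.
move=> [hB eB]; have hA : selfadj A.
  by move=> i j; rewrite -eB /mapn /quotmap hB cls_star.
by apply: (proj1 (qgauge_glb hA)); exists B.
Qed.

Lemma qgauge_approx n (A : Mat Q n n) e : selfadj A -> 0 < e ->
  exists B, lifts A B /\ nu n B < q n A + e.
Proof.
move=> hA he; apply: NNPP => hnone.
suff : q n A + e <= q n A by lra.
apply: (proj2 (qgauge_glb hA)) => r [B [hB [eB ->]]].
by apply: Rnot_lt_le => hlt; apply: hnone; exists B.
Qed.

Lemma qgauge_ge_mul n (A : Mat Q n n) c r : selfadj A -> 0 <= c ->
  (forall B, lifts A B -> r <= c * nu n B) -> r <= c * q n A.
Proof.
move=> hA hc hr; apply: Rle_of_le_add_eps => e he.
have hd : 0 < e / (c + 1) by apply: Rdiv_lt_0_compat; lra.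
have hde : e / (c + 1) * (c + 1) = e by field; lra.
have [B [hB hBe]] := qgauge_approx hA hd.
have := hr B hB; nra.
Qed.

Lemma qgauge_ge0 n (A : Mat Q n n) : selfadj A -> 0 <= q n A.
Proof.
move=> hA; rewrite -(Rmult_1_l (q n A)); apply: qgauge_ge_mul => //; first lra.
by move=> B [hB _]; rewrite Rmult_1_l; exact: nu_ge0.
Qed.

Lemma qgauge_add n (A B : Mat Q n n) : selfadj A -> selfadj B ->
  q n (madd A B) <= q n A + q n B.
Proof.
move=> hA hB; apply: Rle_of_le_add_eps => e he.
have he2 : 0 < e / 2 by lra.
have [C [hC hCe]] := qgauge_approx hA he2.
have [D [hD hDe]] := qgauge_approx hB he2.
have := qgauge_le (lifts_madd HV HS S_star hC hD); have := nu_add (proj1 hC) (proj1 hD); lra.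
Qed.

Lemma qgauge_scale_le n t (A : Mat Q n n) : selfadj A -> 0 < t ->
  q n (mrscal t A) <= t * q n A.
Proof.
move=> hA ht; apply: qgauge_ge_mul => //; first lra.
move=> B hB; rewrite -nu_scal //; last by case: hB.
exact: qgauge_le (lifts_mrscal HV HS S_star t hB).
Qed.

Lemma qgauge_scale n t (A : Mat Q n n) : selfadj A -> 0 < t ->
  q n (mrscal t A) = t * q n A.
Proof.
move=> hA ht; apply: Rle_antisym; first exact: qgauge_scale_le.
have hinv : 0 < / t by exact: Rinv_0_lt_compat.
have := qgauge_scale_le (selfadj_mrscal HQ t hA) hinv; rewrite mrscalK //.
move=> /(Rmult_le_compat_l t _ _ (Rlt_le _ _ ht)).
by rewrite -Rmult_assoc Rinv_r ?Rmult_1_l; lra.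
Qed.

Lemma qgauge_compress n k (X : 'I_n -> 'I_k -> Cx) (A : Mat Q n n) : selfadj A ->
  q k (compress X A) <= opnorm X ^ 2 * q n A.
Proof.
move=> hA; apply: qgauge_ge_mul => //; first exact: pow2_ge_0.
move=> B hB; apply: Rle_trans (qgauge_le (lifts_compress HV HS S_star X hB)) _.
by apply: nu_compress; case: hB.
Qed.

Lemma qgauge_compress_contraction_le N m (X : 'I_N -> 'I_m -> Cx) (A : Mat Q N N) C :
  (forall v, cvnorm2 (cmatvec X v) <= cvnorm2 v) -> lifts A C ->
  q m (compress X A) <= nu N C.
Proof.
move=> hX hC; apply: Rle_trans (qgauge_le (lifts_compress HV HS S_star X hC)) _.
apply: Rle_trans (nu_compress _ (proj1 hC)) _.
have := opnorm_sq_le1 hX; have := nu_ge0 (proj1 hC); nra.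
Qed.

Lemma qgauge_dsum n k (A : Mat Q n n) (B : Mat Q k k) : selfadj A -> selfadj B ->
  q (n + k)%nat (dsum A B) = Rmax (q n A) (q k B).
Proof.
move=> hA hB; apply: Rle_antisym.
  apply: Rle_of_le_add_eps => e he.
  have [C [hC hCe]] := qgauge_approx hA he.
  have [D [hD hDe]] := qgauge_approx hB he.
  apply: Rle_trans (qgauge_le (lifts_dsum HV HS S_star hC hD)) _.
  rewrite nu_dsum; [|by case: hC|by case: hD].
  have := Rmax_l (q n A) (q k B); have := Rmax_r (q n A) (q k B).
  by move=> *; apply: Rmax_lub; lra.
have hAB := selfadj_dsum HQ hA hB.
rewrite -[q _ (dsum A B)]Rmult_1_l; apply: qgauge_ge_mul => //; first lra.
move=> C hC; rewrite Rmult_1_l; apply: Rmax_lub.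
  have := qgauge_compress_contraction_le (@cmatvec_emb_lshift n k) hC.
  suff -> : compress (emb (@lshift n k)) (dsum A B) = A by [].
  by apply: mat_ext => p r; rewrite compress_emb // dsum_lshift.
have := qgauge_compress_contraction_le (@cmatvec_emb_rshift n k) hC.
suff -> : compress (emb (@rshift n k)) (dsum A B) = B by [].
by apply: mat_ext => p r; rewrite compress_emb // dsum_rshift.
Qed.

Lemma qgauge_eq0_lifts n (A : Mat Q n n) : selfadj A -> q n A = 0 ->
  exists f : nat -> Mat V n n, (forall j, lifts A (f j)) /\ Un_cv (fun j => nu n (f j)) 0.
Proof.
move=> hA hq.
have [f hf] : exists f : nat -> Mat V n n,
    forall j, lifts A (f j) /\ nu n (f j) < / INR j.+1.
  apply: (choice (fun j B => lifts A B /\ nu n B < / INR j.+1)) => j.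
  by have := qgauge_approx hA (inv_succ_gt0 j); rewrite hq Rplus_0_l.
exists f; split; first by move=> j; case: (hf j).
apply: Un_cv0_of_lt_inv => j; have [[hB _] hlt] := hf j.
by split=> //; exact: nu_ge0.
Qed.

Lemma lifts1_entry (A : Mat Q 1 1) B : lifts A B ->
  Vsa (B ord0 ord0) /\ A = fun _ _ => cls S (B ord0 ord0).
Proof. by move=> [hB <-]; split; [exact: hB | exact: mat11]. Qed.

Hypothesis S_gauge_ideal : is_gauge_ideal Vsa (nu1 nu) (fun x => S x /\ Vsa x).

(* With [A = pi x], lifts [y_j] of [A] and [z_j] of [-A] of vanishing gauge give the
   approximants [a_j = x - y_j] and [b_j = z_j + x] of the gauge-ideal condition. *)
Lemma qgauge1_definite (A : Mat Q 1 1) : selfadj A -> q 1%nat A = 0 ->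
  q 1%nat (mopp A) = 0 -> A = fun _ _ => vzero.
Proof.
move=> hA hq hqN.
have [B0 hB0] := selfadj_lift_exists HV HS S_star hA.
have [hx hAx] := lifts1_entry hB0; set x := B0 ord0 ord0 in hx hAx.
have [y [hy cvy]] := qgauge_eq0_lifts hA hq.
have [z [hz cvz]] := qgauge_eq0_lifts (selfadj_mopp HQ hA) hqN.
have hcls_y j : cls S (y j ord0 ord0) = cls S x.
  have [_ eA] := lifts1_entry (hy j).
  by move: (congr1 (fun M => M ord0 ord0) eA); rewrite hAx => <-.
have hcls_z j : cls S (z j ord0 ord0) = cls S (vopp x).
  have [_ eA] := lifts1_entry (hz j).
  move: (congr1 (fun M => M ord0 ord0) eA); rewrite /mopp hAx => <-.
  exact: cls_opp.
have nu1_entry (f : nat -> Mat V 1 1) j : nu1 nu (f j ord0 ord0) = nu 1%nat (f j).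
  by rewrite /nu1 -mat11.
suff [hSx _] : S x /\ Vsa x.
  by rewrite hAx; apply: mat_ext => i j; apply/(quotmap_kernel HV HS).
apply: (S_gauge_ideal hx (fun j => vsub x (y j ord0 ord0)) (fun j => vadd (z j ord0 ord0) x)).
- move=> j; split.
    by rewrite -oppvB //; apply: subspaceN HV HS _ _; apply/cls_eq => //; rewrite hcls_y.
  by rewrite /Vsa -subvSS // -hx -(proj1 (lifts1_entry (hy j))).
- move=> j; split.
    by rewrite -[X in vadd _ X]oppvK //; apply/cls_eq => //; rewrite hcls_z.
  by rewrite /Vsa starvD // -hx -(proj1 (lifts1_entry (hz j))).
- by apply: Un_cv_ext cvy => j; rewrite subKv // nu1_entry.
- by apply: Un_cv_ext cvz => j; rewrite addvK // nu1_entry.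
Qed.

Lemma qgauge_LinfMOS : is_LinfMOS Q q.
Proof.
have q_def := gauge_definite_of_definite1 q HQ qgauge_ge0 qgauge_compress qgauge1_definite.
split=> //; split; last by split; [exact: qgauge_compress | exact: qgauge_dsum].
move=> n; split; first exact: qgauge_ge0.
split; first exact: qgauge_add.
split; first exact: qgauge_scale.
exact: q_def.
Qed.

End QuotientGauge.

Lemma quotmap_contractive (V : StarOps) (nu : forall n, Mat V n n -> R) (S : V -> Prop) :
  is_LinfMOS V nu -> is_subspace V S -> (forall x, S x -> S (vstar x)) ->
  comp_gauge_contractive V nu (QuotOps V S) (qgauge V nu S) (quotmap V S).
Proof.
move=> HL HS S_star; have HV : is_star_vspace V by case: HL.
split; first exact: quotmap_linear.
by move=> n A hA; apply: qgauge_le => //; split.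
Qed.

Theorem theorem3p20 (V : StarOps) (nu : forall n, Mat V n n -> R) (S : V -> Prop) :
  is_LinfMOS V nu -> is_subspace V S ->
  ((exists (W : StarOps) (om : forall n, Mat W n n -> R) (phi : V -> W),
       is_LinfMOS W om /\ comp_gauge_bounded V nu W om phi /\
       (forall x, S x <-> phi x = vzero))
    <-> is_MOS_ideal V nu S)
  /\
  (is_MOS_ideal V nu S ->
     is_LinfMOS (QuotOps V S) (qgauge V nu S) /\
     comp_gauge_contractive V nu (QuotOps V S) (qgauge V nu S) (quotmap V S) /\
     (forall x, S x <-> quotmap V S x = vzero)).
Proof.
move=> HL HS; have HV : is_star_vspace V by case: HL.
have quotient_ok : is_MOS_ideal V nu S ->
    is_LinfMOS (QuotOps V S) (qgauge V nu S) /\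
    comp_gauge_contractive V nu (QuotOps V S) (qgauge V nu S) (quotmap V S) /\
    (forall x, S x <-> quotmap V S x = vzero).
  move=> [_ [S_star S_ideal]]; split; first exact: qgauge_LinfMOS.
  by split; [exact: quotmap_contractive | exact: quotmap_kernel].
split=> //; split.
  by move=> [W [om [phi [HLW [phi_bd hker]]]]]; exact: kernel_is_MOS_ideal phi_bd hker.
move=> /quotient_ok [HQL [[pi_lin pi_contr] pi_ker]].
exists (QuotOps V S), (qgauge V nu S), (quotmap V S); split=> //; split=> //.
split=> //; exists 1; split; first lra.
by move=> n A hA; rewrite Rmult_1_l; exact: pi_contr.
Qed.
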